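(* Let $A$ be any algebra (over a field of characteristic $0$) that is alternative and satisfies $(ab)c=(ba)c$ for all $a,b,c$. Then for all $a,b,c,d\in A$: \[ ((ab)c)d=((ac)b)d,\qquad d((ab)c)=((ab)d)c,\qquad d(c(ab))=((ac)d)b. \]
   Context: An algebra is alternative if $(x,x,y)=0=(x,y,y)$ for all $x,y$, where $(x,y,z)=(xy)z-x(yz)$. This variety is the Koszul dual of the variety of left-symmetric algebras satisfying $a(bc)+b(ac)+a(cb)+c(ab)+b(ca)+c(ba)=0$. *)

From mathcomp Require Import all_boot all_order all_algebra.
Set Implicit Arguments. Unset Strict Implicit. Unset Printing Implicit Defensive.
Import GRing.Theory.
Local Open Scope ring_scope.

Definition bilinear_mul (F : fieldType) (V : lmodType F) (mul : V -> V -> V) :=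
  (forall (a : F) (x y z : V), mul (a *: x + y) z = a *: mul x z + mul y z) /\
  (forall (a : F) (x y z : V), mul x (a *: y + z) = a *: mul x y + mul x z).

Definition assoc (F : fieldType) (V : lmodType F) (mul : V -> V -> V) (x y z : V) :=
  mul (mul x y) z - mul x (mul y z).

Definition alternative (F : fieldType) (V : lmodType F) (mul : V -> V -> V) :=
  forall x y : V, assoc mul x x y = 0 /\ assoc mul x y y = 0.

From mathcomp Require Import all_boot all_order all_algebra.
Set Implicit Arguments. Unset Strict Implicit. Unset Printing Implicit Defensive.
Import GRing.Theory.
Local Open Scope ring_scope.

(* The associator of an alternative algebra is alternating, so the hypothesis
   (xy)z = (yx)z turns its skew-symmetry in the first two arguments into
   2(xy)z = x(yz) + y(xz).  Hence any u with uA = 0, e.g. a commutator, also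
   gives (xu)A = 0; this makes ((ab)c)d symmetric in b and c, and then makes
   every associator a left annihilator of A.  Teichmueller's identity now
   forces associators with a product among their arguments to vanish, and
   with them d(a,b,c).  The last two identities are (d,ab,c) = 0 and
   d(c,a,b) = 0 in disguise.  Characteristic 0 is only used to divide by 2
   and 3. *)

Lemma mulrn_eq0_pchar0 (F : fieldType) (V : lmodType F) (v : V) (n : nat) :
  [pchar F] =i pred0 -> (0 < n)%N -> (v *+ n == 0) = (v == 0).
Proof.
by move=> /pcharf0P F0 n_gt0; rewrite -scaler_nat scaler_eq0 F0 eqn0Ngt n_gt0.
Qed.

Lemma eq0_of_symmetric_cyclic (F : fieldType) (W : lmodType F) (T : Type)
    (k : T -> T -> T -> W) :
  [pchar F] =i pred0 ->
  (forall p q r, k p q r = k q p r) ->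
  (forall p q r, k p q r + k p r q + k q r p *+ 2 = 0) ->
  forall p q r, k p q r = 0.
Proof.
move=> pchar0 ksym kcyc p q r.
have cancel_first (a b c : W) : a + b + c *+ 2 = a + c + b *+ 2 -> b = c.
  by rewrite -!addrA !mulr2n => /addrI; rewrite addrCA => /addrI /addrI ->.
have e1 := kcyc r p q; have e2 := kcyc p r q; have e3 := kcyc q r p.
rewrite (ksym p r) in e2; rewrite (ksym q r) (ksym q p) in e3.
have BC : k r q p = k p q r.
  exact: (cancel_first (k r p q) _ _ (etrans e1 (esym e2))).
have AC : k r p q = k p q r.
  by apply: (cancel_first (k r q p)); rewrite e3 -e1 (addrC (k r q p)).
move: e1; rewrite AC BC -mulr2n => /eqP.
by rewrite mulrn_eq0_pchar0 // -mulr2n mulrn_eq0_pchar0 // => /eqP.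
Qed.

Section Bilinear.
Variables (F : fieldType) (V : lmodType F) (mul : V -> V -> V).
Hypothesis mul_bilinear : bilinear_mul mul.

Lemma mulDl x y z : mul (x + y) z = mul x z + mul y z.
Proof. by have := mul_bilinear.1 1 x y z; rewrite !scale1r. Qed.

Lemma mulDr x y z : mul x (y + z) = mul x y + mul x z.
Proof. by have := mul_bilinear.2 1 x y z; rewrite !scale1r. Qed.

Lemma mul0l x : mul 0 x = 0.
Proof. by apply: (addrI (mul 0 x)); rewrite -mulDl !addr0. Qed.

Lemma mul0r x : mul x 0 = 0.
Proof. by apply: (addrI (mul x 0)); rewrite -mulDr !addr0. Qed.

Lemma mulNl x y : mul (- x) y = - mul x y.
Proof. by apply: (addrI (mul x y)); rewrite -mulDl !subrr mul0l. Qed.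

Lemma mulNr x y : mul x (- y) = - mul x y.
Proof. by apply: (addrI (mul x y)); rewrite -mulDr !subrr mul0r. Qed.

Lemma mulMnl x y n : mul (x *+ n) y = mul x y *+ n.
Proof. by elim: n => [|n IH]; rewrite ?mul0l // !mulrS mulDl IH. Qed.

Lemma mulBl x y z : mul (x - y) z = mul x z - mul y z.
Proof. by rewrite mulDl mulNl. Qed.

Lemma mulBr x y z : mul x (y - z) = mul x y - mul x z.
Proof. by rewrite mulDr mulNr. Qed.

Local Notation assoc := (assoc mul).

Lemma assocDl x y z t : assoc (x + y) z t = assoc x z t + assoc y z t.
Proof. by rewrite /assoc !(mulDl, mulDr) opprD addrACA. Qed.

Lemma assocDm x y z t : assoc x (y + z) t = assoc x y t + assoc x z t.
Proof. by rewrite /assoc !(mulDl, mulDr) opprD addrACA. Qed.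

Lemma assocDr x y z t : assoc x y (z + t) = assoc x y z + assoc x y t.
Proof. by rewrite /assoc !(mulDl, mulDr) opprD addrACA. Qed.

Lemma teichmuller w x y z :
  assoc (mul w x) y z - assoc w (mul x y) z + assoc w x (mul y z) =
  mul w (assoc x y z) + mul (assoc w x y) z.
Proof.
rewrite /assoc !(mulBl, mulBr) opprB addrAC subrKA addrACA [RHS]addrACA.
by rewrite [mul w _ + _]addrC.
Qed.

Section Alternative.
Hypothesis mul_alternative : alternative mul.

Lemma assoc_swapl x y z : assoc y x z = - assoc x y z.
Proof.
have := (mul_alternative (x + y) z).1.
rewrite assocDl !assocDm (mul_alternative x z).1 (mul_alternative y z).1.
by rewrite add0r addr0 addrC => /eqP; rewrite addr_eq0 => /eqP.
Qed.

Lemma assoc_swapr x y z : assoc x z y = - assoc x y z.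
Proof.
have := (mul_alternative x (y + z)).2.
rewrite assocDm !assocDr (mul_alternative x y).2 (mul_alternative x z).2.
by rewrite add0r addr0 addrC => /eqP; rewrite addr_eq0 => /eqP.
Qed.

Lemma assoc_cycle x y z : assoc x y z = assoc z x y.
Proof. by rewrite (assoc_swapl x z) (assoc_swapr x y z) opprK. Qed.

Section LeftCommutative.
Hypothesis pchar0 : [pchar F] =i pred0.
Hypothesis mulCl : forall x y z, mul (mul x y) z = mul (mul y x) z.

Lemma mull_mul2n x y z :
  mul (mul x y) z *+ 2 = mul x (mul y z) + mul y (mul x z).
Proof.
have := assoc_swapl x y z; rewrite /assoc mulCl opprB => swap.
by rewrite mulr2n -{1}(subrK (mul y (mul x z)) (mul (mul x y) z)) swap addrAC subrK.
Qed.

Definition left_annihilator u := forall t, mul u t = 0.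

Lemma left_annihilator_commutator x y : left_annihilator (mul x y - mul y x).
Proof. by move=> t; rewrite mulBl mulCl subrr. Qed.

Lemma left_annihilator_mulr x u : left_annihilator u -> left_annihilator (mul x u).
Proof.
move=> uA t; apply/eqP; rewrite -(mulrn_eq0_pchar0 _ pchar0 (isT : 0 < 2)%N).
by rewrite mull_mul2n !uA mul0r addr0.
Qed.

Lemma mullAC a b c d : mul (mul (mul a b) c) d = mul (mul (mul a c) b) d.
Proof.
set X := mul (mul (mul a b) c) d; set Y := mul (mul (mul a c) b) d.
have E : mul (mul (mul a b) c *+ 2 - mul (mul a c) b *+ 2) d = Y - X.
  rewrite !mull_mul2n opprD addrACA -mulBr mulDl.
  rewrite (left_annihilator_mulr a (left_annihilator_commutator b c)) add0r.
  by rewrite mulBl mulCl (mulCl c).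
apply/eqP; rewrite -subr_eq0 -(mulrn_eq0_pchar0 _ pchar0 (isT : 0 < 3)%N).
by rewrite mulrSr mulrnBl -[X *+ 2]mulMnl -[Y *+ 2]mulMnl -mulBl E subrKA subrr.
Qed.

Lemma left_annihilator_assoc x y z : left_annihilator (assoc x y z).
Proof.
move=> t; apply/eqP; rewrite -(mulrn_eq0_pchar0 _ pchar0 (isT : 0 < 2)%N).
rewrite -mulMnl mulr2n -{2}[assoc x y z]opprK -(assoc_swapr x y z) /assoc opprB.
rewrite addrACA [- _ + - _]addrC addrACA mulDl mulBl mullAC subrr add0r -mulBr.
by rewrite (left_annihilator_mulr x (left_annihilator_commutator z y)).
Qed.

Lemma assoc_mulC x y z t : assoc (mul x y) z t = assoc (mul y x) z t.
Proof. by rewrite /assoc (mulCl x y z) (mulCl x y (mul z t)). Qed.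

Lemma assoc_mull_sum x y z t :
  assoc (mul x y) t z + assoc (mul x z) t y + assoc (mul y z) t x *+ 2 = 0.
Proof.
(* Teichmueller's identity for (y, z) and for (z, y): the right-hand sides
   cancel because w(x,y,z) is alternating and (w,x,y)z = 0. *)
have teich u v : assoc t x (mul u v) - assoc t (mul x u) v =
                 mul t (assoc x u v) - assoc (mul t x) u v.
  set a := assoc (mul t x) u v; set b := assoc t (mul x u) v.
  set c := assoc t x (mul u v).
  have := teichmuller t x u v; rewrite left_annihilator_assoc addr0 -/a -/b -/c => <-.
  by rewrite (addrC (a - b)) addrCA [RHS]addrC addKr.
have skew : assoc t x (mul y z) - assoc t (mul x y) z +
             (assoc t x (mul z y) - assoc t (mul x z) y) = 0.
  rewrite !teich (assoc_swapr x y z) (assoc_swapr (mul t x) y z) mulNr.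
  by rewrite -opprD subrr.
move: skew; rewrite !(assoc_cycle t x) (assoc_mulC z y).
rewrite (assoc_swapl (mul x y) t) (assoc_swapl (mul x z) t) !opprK => <-.
by rewrite mulr2n [RHS]addrACA [RHS]addrC.
Qed.

Lemma assoc_mull_eq0 x y z t : assoc (mul x y) z t = 0.
Proof.
exact: (eq0_of_symmetric_cyclic pchar0 (fun p q r => assoc_mulC p q z r)
          (fun p q r => assoc_mull_sum p q r z)).
Qed.

Lemma assoc_mulm_eq0 x y z t : assoc x (mul y z) t = 0.
Proof. by rewrite (assoc_swapl (mul y z)) assoc_mull_eq0 oppr0. Qed.

Lemma assoc_mulr_eq0 x y z t : assoc x y (mul z t) = 0.
Proof. by rewrite assoc_cycle assoc_mull_eq0. Qed.

Lemma mul_assoc_eq0 w x y z : mul w (assoc x y z) = 0.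
Proof.
have := teichmuller w x y z.
rewrite assoc_mull_eq0 assoc_mulm_eq0 assoc_mulr_eq0 left_annihilator_assoc.
by rewrite subr0 !addr0.
Qed.

Lemma mulr_prodl a b c d : mul d (mul (mul a b) c) = mul (mul (mul a b) d) c.
Proof. by rewrite (mulCl (mul a b) d c); apply/esym/subr0_eq/assoc_mulm_eq0. Qed.

Lemma mulr_prodr a b c d : mul d (mul c (mul a b)) = mul (mul (mul a c) d) b.
Proof.
have -> : mul c (mul a b) = mul (mul c a) b - assoc c a b.
  by rewrite /assoc opprB subrKC.
by rewrite mulBr mul_assoc_eq0 subr0 mulr_prodl (mulCl c a d).
Qed.

End LeftCommutative.
End Alternative.
End Bilinear.

Theorem mainTheorem18 (F : fieldType) (V : lmodType F) (mul : V -> V -> V) :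
  [pchar F] =i pred0 ->
  bilinear_mul mul ->
  alternative mul ->
  (forall a b c : V, mul (mul a b) c = mul (mul b a) c) ->
  forall a b c d : V,
    mul (mul (mul a b) c) d = mul (mul (mul a c) b) d /\
    mul d (mul (mul a b) c) = mul (mul (mul a b) d) c /\
    mul d (mul c (mul a b)) = mul (mul (mul a c) d) b.
Proof.
move=> pchar0 mul_bilinear mul_alternative mulCl a b c d.
by split; [|split]; [apply: mullAC | apply: mulr_prodl | apply: mulr_prodr].
Qed.
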